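(* Let $\mathcal X$ and $\mathcal Y$ be measurable spaces, let $\Theta$ be a parameter set, and let $L(\theta;y,x)$ be a real-valued loss on $\Theta\times\mathcal Y\times\mathcal X$. Let $\theta(\cdot)$ be the regression functional $\theta(P)=\mathrm{argmin}_{\theta\in\Theta}\,E_P[L(\theta;Y,X)]$ (assumed to exist uniquely for the joint distributions on which it is evaluated). Fix a Markov kernel $P_{Y|X}$. If there is $\theta_0\in\Theta$ that minimizes $\theta\mapsto E[L(\theta;Y,x)\mid X=x]=\int L(\theta;y,x)\,P_{Y|X=x}(dy)$ for every $x\in\mathcal X$, then $\theta(\cdot)$ is well-specified for $P_{Y|X}$, and moreover $\theta(P_{Y|X}\otimes P_X)=\theta_0$ for every acceptable regressor distribution $P_X$.
   Context: A joint distribution $P$ of $(Y,X)$ on $\mathcal Y\times\mathcal X$ is written $P=P_{Y|X}\otimes P_X$, meaning $P(dy,dx)=P_{Y|X=x}(dy)\,P_X(dx)$, where $P_X$ is the marginal distribution of the regressor $X$ and $P_{Y|X}: x\mapsto P_{Y|X=x}$ is a Markov kernel (a regular conditional distribution defined for every $x$). A regression functional assigns a value $\theta(P)\in\Theta$ to joint distributions $P$ in a class $\mathcal P$. There is a designated set of ''acceptable'' regressor distributions (those for which the functional is identifiable/defined); $P_{Y|X}\otimes P_X\in\mathcal P$ for every acceptable $P_X$, and the set of acceptable distributions is closed under mixing: if $P_X$ is acceptable and $P_X'$ is any distribution on $\mathcal X$, then $\alpha P_X+(1-\alpha)P_X'$ is acceptable for $0<\alpha\le 1$. The functional $\theta$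 is called well-specified for $P_{Y|X}$ if $\theta(P_{Y|X}\otimes P_X)=\theta(P_{Y|X}\otimes P_X')$ for all acceptable regressor distributions $P_X,P_X'$. All expectations are assumed to exist. *)

From HB Require Import structures.
From mathcomp Require Import all_boot all_order all_algebra.
From mathcomp Require Import all_classical all_reals all_analysis.
Set Implicit Arguments. Unset Strict Implicit. Unset Printing Implicit Defensive.
Import Order.TTheory GRing.Theory Num.Theory.
Local Open Scope classical_set_scope.
Local Open Scope ring_scope.
Local Open Scope ereal_scope.

(* Joint distributions of (Y,X) live on Y * X,
   so a pair is (y, x), matching the paper's L(theta; y, x). *)

(* P is the joint distribution P_{Y|X} (x) P_X :
   P(dy,dx) = P_{Y|X=x}(dy) P_X(dx), i.e. for every measurable A,
   P A = \int P_{Y|X=x}({y | (y,x) \in A}) P_X(dx). *)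
Definition is_joint {dX dY} {X : measurableType dX} {Y : measurableType dY}
  {R : realType} (k : R.-pker X ~> Y) (PX : probability X R)
  (P : probability (Y * X)%type R) : Prop :=
  forall A : set (Y * X), measurable A ->
    P A = \int[PX]_x (k x (ysection A x)).

Definition risk {dX dY} {X : measurableType dX} {Y : measurableType dY}
  {R : realType} {Theta : Type} (L : Theta -> Y -> X -> R)
  (P : probability (Y * X)%type R) (t : Theta) : \bar R :=
  \int[P]_z (L t z.1 z.2)%:E.

Definition cond_risk {dX dY} {X : measurableType dX} {Y : measurableType dY}
  {R : realType} {Theta : Type} (L : Theta -> Y -> X -> R)
  (k : R.-pker X ~> Y) (x : X) (t : Theta) : \bar R :=
  \int[k x]_y (L t y x)%:E.

Definition is_argmin {Theta : Type} {R : realType} (f : Theta -> \bar R)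
  (t : Theta) : Prop := forall t', f t <= f t'.

Definition unique_argmin {Theta : Type} {R : realType} (f : Theta -> \bar R)
  (t : Theta) : Prop := is_argmin f t /\ forall t', is_argmin f t' -> t' = t.

(* The regression functional theta(P) = argmin_theta E_P[L(theta;Y,X)];
   it is the unique minimizer when one exists (the only case in which it is
   evaluated); otherwise an arbitrary default point of Theta. *)
Definition reg_functional {dX dY} {X : measurableType dX}
  {Y : measurableType dY} {R : realType} {Theta : pointedType}
  (L : Theta -> Y -> X -> R) (P : probability (Y * X)%type R) : Theta :=
  match pselect (exists t, unique_argmin (risk L P) t) with
  | left h => projT1 (cid h)
  | right _ => point
  end.

Definition well_specified {dX dY} {X : measurableType dX}
  {Y : measurableType dY} {R : realType} {Theta : Type}
  (theta : probability (Y * X)%type R -> Theta)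
  (acceptable : set (probability X R)) (k : R.-pker X ~> Y) : Prop :=
  forall (PX PX' : probability X R) (P P' : probability (Y * X)%type R),
    acceptable PX -> acceptable PX' -> is_joint k PX P -> is_joint k PX' P' ->
    theta P = theta P'.

Definition mixing_closed {dX} {X : measurableType dX} {R : realType}
  (acceptable : set (probability X R)) : Prop :=
  forall (PX PX' Q : probability X R) (a : R), acceptable PX ->
    (0 < a <= 1)%R ->
    (forall A, measurable A -> Q A = (a%:E * PX A + (1 - a)%:E * PX' A)) ->
    acceptable Q.

(* Disintegrate the joint law: P = PX >>= (x |-> law of (Y, x) with Y ~ k x)
   in the Giry monad, so E_P[L(t; Y, X)] = \int E[L(t; Y, x) | X = x] PX(dx)
   for every t.  If theta0 minimises every integrand, it minimises the
   integral; uniqueness of the argmin then forces theta(P) = theta0 whatever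
   the acceptable PX, which is well-specification. *)

From HB Require Import structures.
From mathcomp Require Import all_boot all_order all_algebra.
From mathcomp Require Import all_classical all_reals all_analysis.
From mathcomp Require Import measurable_realfun giry.
Import Order.TTheory GRing.Theory Num.Theory.
Local Open Scope classical_set_scope.
Local Open Scope ring_scope.
Local Open Scope ereal_scope.

Section kernel_section_def.
Context {dX dY} {X : measurableType dX} {Y : measurableType dY} {R : realType}.
Variables (k : R.-spker X ~> Y) (x : X).

(* [k x] carries no subprobability instance of its own, so one is attached to
   a copy of it. *)
Let kx : set Y -> \bar R := k x.
HB.instance Definition _ := Measure.copy kx (k x).
HB.instance Definition _ :=
  Measure_isSubProbability.Build _ _ _ kx (sprob_kernel_le1 k x).

Definition kernel_section : giry (Y * X)%type R :=
  giry_map (pair2_measurable x) kx.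

End kernel_section_def.

Section kernel_section.
Context {dX dY} {X : measurableType dX} {Y : measurableType dY} {R : realType}.
Variable k : R.-spker X ~> Y.

Lemma kernel_sectionE x A : kernel_section k x A = k x (ysection A x).
Proof.
rewrite /kernel_section /= /pushforward; congr (k x _).
by apply/seteqP; split => y /=; rewrite /ysection /= in_setE.
Qed.

Lemma measurable_kernel_section : measurable_fun [set: X] (kernel_section k).
Proof.
apply: measurable_giry_codensity => // B mB.
have mBswap : measurable ((fun z : X * Y => (z.2, z.1)) @^-1` B).
  by rewrite -[_ @^-1` _]setTI; exact: measurable_swap.
rewrite (_ : (fun x => _) =
  fun x => k x (xsection ((fun z : X * Y => (z.2, z.1)) @^-1` B) x)).
  by apply: measurable_fun_xsection_finite_kernel; rewrite inE.
by apply/funext => x; rewrite kernel_sectionE.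
Qed.

Lemma kernel_section_integral (x : X) (f : Y * X -> \bar R) :
  measurable_fun [set: Y * X] f -> (forall z, 0 <= f z) ->
  giry_int (kernel_section k x) f = \int[k x]_y f (y, x).
Proof. by move=> mf f0; rewrite giry_int_map. Qed.

Lemma measurable_fun_kernel_integral (f : Y * X -> \bar R) :
  measurable_fun [set: Y * X] f -> (forall z, 0 <= f z) ->
  measurable_fun [set: X] (fun x => \int[k x]_y f (y, x)).
Proof.
move=> mf f0; under eq_fun do rewrite -kernel_section_integral//.
exact: measurableT_comp (measurable_giry_int mf f0) measurable_kernel_section.
Qed.

End kernel_section.

Section joint_distribution.
Context {dX dY} {X : measurableType dX} {Y : measurableType dY} {R : realType}.
Context {k : R.-pker X ~> Y} {PX : probability X R}.

Definition joint_bind : giry (Y * X)%type R :=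
  giry_bind (PX : giry X R) (measurable_kernel_section k).

Lemma joint_bindE A : measurable A ->
  joint_bind A = \int[PX]_x k x (ysection A x).
Proof.
move=> mA; rewrite /joint_bind /giry_bind /= giry_int_map//.
- by apply: eq_integral => x _; rewrite /= kernel_sectionE.
- exact: measurable_giry_ev.
Qed.

Lemma ge0_integral_joint_bind (f : Y * X -> \bar R) :
  measurable_fun [set: Y * X] f -> (forall z, 0 <= f z) ->
  \int[joint_bind]_z f z = \int[PX]_x \int[k x]_y f (y, x).
Proof.
move=> mf f0; rewrite [LHS]giry_int_bind//.
by apply: eq_integral => x _; rewrite kernel_section_integral.
Qed.

Context {P : probability (Y * X)%type R}.
Hypothesis jointP : is_joint k PX P.

Lemma ge0_integral_joint (f : Y * X -> \bar R) :
  measurable_fun [set: Y * X] f -> (forall z, 0 <= f z) ->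
  \int[P]_z f z = \int[PX]_x \int[k x]_y f (y, x).
Proof.
move=> mf f0; rewrite -ge0_integral_joint_bind//.
by apply: eq_measure_integral => A mA _; rewrite joint_bindE//; exact: jointP.
Qed.

Lemma kernel_integralE (f : Y * X -> \bar R) x :
  \int[k x]_y f (y, x) = \int[k x]_y f^\+ (y, x) - \int[k x]_y f^\- (y, x).
Proof.
rewrite integralE; congr (_ - _); apply: eq_integral => y _.
  by rewrite !funeposE.
by rewrite !funenegE.
Qed.

Lemma integrable_ge0_kernel_integral (g : Y * X -> \bar R) :
  (forall z, 0 <= g z) -> P.-integrable [set: Y * X] g ->
  PX.-integrable [set: X] (fun x => \int[k x]_y g (y, x)).
Proof.
move=> g0 /integrableP[mg intg]; apply/integrableP; split.
  exact: measurable_fun_kernel_integral.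
under eq_integral do rewrite gee0_abs ?integral_ge0//.
rewrite -ge0_integral_joint//.
by under eq_integral do rewrite -[g _]gee0_abs//.
Qed.

Lemma integrable_kernel_integral (f : Y * X -> \bar R) :
  P.-integrable [set: Y * X] f ->
  PX.-integrable [set: X] (fun x => \int[k x]_y f (y, x)).
Proof.
move=> intf; rewrite (_ : (fun x => _) = (fun x => \int[k x]_y f^\+ (y, x))
    \- (fun x => \int[k x]_y f^\- (y, x))).
  apply: integrableB => //; apply: integrable_ge0_kernel_integral => //.
  - exact: integrable_funepos.
  - exact: integrable_funeneg.
by apply/funext => x; rewrite [LHS]kernel_integralE.
Qed.

Lemma integral_joint (f : Y * X -> \bar R) :
  P.-integrable [set: Y * X] f ->
  \int[P]_z f z = \int[PX]_x \int[k x]_y f (y, x).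
Proof.
move=> intf; have mf := measurable_int _ intf.
have [mfp mfn] := (measurable_funepos mf, measurable_funeneg mf).
rewrite integralE !ge0_integral_joint// -integralB//.
- by apply: eq_integral => x _; rewrite [RHS]kernel_integralE.
- apply: integrable_ge0_kernel_integral => //; exact: integrable_funepos.
- apply: integrable_ge0_kernel_integral => //; exact: integrable_funeneg.
Qed.

End joint_distribution.

Section regression_functional.
Context {dX dY} {X : measurableType dX} {Y : measurableType dY} {R : realType}.
Context {Theta : pointedType} (L : Theta -> Y -> X -> R) (k : R.-pker X ~> Y).

Lemma risk_joint {PX P} t : is_joint k PX P ->
  P.-integrable [set: Y * X] (fun z => (L t z.1 z.2)%:E) ->
  risk L P t = \int[PX]_x cond_risk L k x t.
Proof. by move=> jP intL; rewrite /risk (integral_joint jP _ intL). Qed.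

Lemma is_argmin_risk_joint {PX P} t0 : is_joint k PX P ->
  (forall t, P.-integrable [set: Y * X] (fun z => (L t z.1 z.2)%:E)) ->
  (forall x, is_argmin (cond_risk L k x) t0) -> is_argmin (risk L P) t0.
Proof.
move=> jP intL hmin t; rewrite !(risk_joint _ jP)//.
apply: le_integral => //; last by move=> x _; exact: hmin.
- exact: integrable_kernel_integral jP _ (intL t0).
- exact: integrable_kernel_integral jP _ (intL t).
Qed.

Lemma reg_functional_argmin P t0 : (exists t, unique_argmin (risk L P) t) ->
  is_argmin (risk L P) t0 -> reg_functional L P = t0.
Proof.
move=> ex_min min0; rewrite /reg_functional; case: pselect => [h|//].
by case: (cid h) => t [_ uniq_t] /=; exact/esym/uniq_t.
Qed.

End regression_functional.

Theorem lemma3p3p1 (dX dY : measure_display) (X : measurableType dX)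
  (Y : measurableType dY) (R : realType) (Theta : pointedType)
  (L : Theta -> Y -> X -> R) (k : R.-pker X ~> Y)
  (acceptable : set (probability X R))
  (* standing assumptions of the context *)
  (hmix : mixing_closed acceptable)
  (hL_meas : forall t, measurable_fun [set: Y * X] (fun z => L t z.1 z.2))
  (hint_cond : forall t x, (k x).-integrable [set: Y] (fun y => (L t y x)%:E))
  (hint_joint : forall PX P t, acceptable PX -> is_joint k PX P ->
     P.-integrable [set: Y * X] (fun z => (L t z.1 z.2)%:E))
  (hdef : forall PX P, acceptable PX -> is_joint k PX P ->
     exists t, unique_argmin (risk L P) t)
  (* hypothesis of the lemma *)
  (theta0 : Theta)
  (hmin : forall x, is_argmin (cond_risk L k x) theta0) :
  well_specified (reg_functional L) acceptable k /\
  (forall PX P, acceptable PX -> is_joint k PX P ->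
     reg_functional L P = theta0).
Proof.
(* [hL_meas] and [hint_cond] follow from [hint_joint]. *)
have theta_joint PX P : acceptable PX -> is_joint k PX P ->
    reg_functional L P = theta0.
  move=> hPX jP; apply: reg_functional_argmin; first exact: hdef hPX jP.
  exact: is_argmin_risk_joint jP (fun t => hint_joint PX P t hPX jP) hmin.
split=> // PX PX' P P' hPX hPX' jP jP'.
by rewrite (theta_joint PX P) ?(theta_joint PX' P').
Qed.
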